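(* Let $m\ge 1$, let $\lambda_1\ge 0$ and $\lambda_2\ge 0$, and let $f_1\ge f_2\ge\cdots\ge f_m$ be real numbers. Then there exist real numbers $\tau_{i0}\in[-\lambda_1,\lambda_1]$ for $i=1,\dots,m$ and real numbers $\tau_{ij}\in[-\lambda_2,\lambda_2]$ for $i\neq j\in\{1,\dots,m\}$, satisfying $\tau_{ij}=-\tau_{ji}$ for all $i\ne j$, such that $$f_i+\tau_{i0}+\sum_{j\in\{1,\dots,m\}\setminus\{i\}}\tau_{ij}=0,\qquad i=1,\dots,m,$$ if and only if $$\sum_{j=1}^{k}f_j\le \lambda_1 k+\lambda_2 k(m-k)\quad\text{for } k=1,\dots,m,$$ and $$\sum_{j=k+1}^{m}f_j\ge -\lambda_1(m-k)-\lambda_2 k(m-k)\quad\text{for } k=0,\dots,m-1.$$ *)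

From mathcomp Require Import all_boot all_order all_algebra.
From mathcomp Require Import all_reals.
Set Implicit Arguments. Unset Strict Implicit. Unset Printing Implicit Defensive.

(* Node i carries the value f i; it may receive a source s i with |s i| <= lam1
   and exchange with each node j a flow t i j = - t j i with |t i j| <= lam2.
   The configuration is balanced when every residual f i + s i + sum_j t i j is 0.

   Necessity: summing the residuals over a set S of nodes, the flow inside S
   cancels, so |f(S)| <= lam1 |S| + lam2 |S| (m - |S|) =: capacity |S|.
   Sufficiency: the squared norm of the residual vector (the defect) attains its
   minimum on the compact feasible set.  First-order conditions at a minimizer
   show that nodes with positive residual have saturated sources and saturated
   flows towards every other node; summing over the set of these nodes contradicts
   the cut condition, and by the symmetry f |-> -f no residual is negative either.  For nonincreasing f it suffices to test prefixes (upper
   bound) and suffixes (lower bound) (sorted_cut_iff), which gives theorem1. *)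

From mathcomp Require Import all_boot all_order all_algebra.
From mathcomp Require Import all_reals all_classical all_analysis.
From mathcomp Require Import zify ring lra.
Import Order.TTheory GRing.Theory Num.Theory.
Import numFieldNormedType.Exports.
Local Open Scope ring_scope.
Set Implicit Arguments. Unset Strict Implicit.

Section Flows.
Variables (R : realFieldType) (m : nat).
Implicit Types (f s : 'I_m -> R) (t : 'I_m -> 'I_m -> R) (S : {set 'I_m}).

Definition residual f s t (i : 'I_m) := f i + s i + \sum_j t i j.

Definition defect f s t := \sum_i residual f s t i ^+ 2.

Lemma sum_delta (F : 'I_m -> R) (j : 'I_m) : \sum_b F b * (b == j)%:R = F j.
Proof.
rewrite (bigD1 j) //= eqxx mulr1 big1 ?addr0 // => b /negbTE ->.
by rewrite mulr0.
Qed.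

Lemma card_setC_ord S : #|~: S| = (m - #|S|)%N.
Proof. by rewrite cardsCs finset.setCK card_ord. Qed.

Lemma sum_split_setC (F : 'I_m -> R) S :
  \sum_i F i = \sum_(i in S) F i + \sum_(i in ~: S) F i.
Proof. by rewrite (bigID (mem S)) /=; congr (_ + _); apply: eq_bigl => j; rewrite inE. Qed.

Lemma sum_cut t (anti : forall i j, t i j = - t j i) S :
  \sum_(i in S) \sum_j t i j = \sum_(i in S) \sum_(j in ~: S) t i j.
Proof.
under eq_bigr do rewrite (sum_split_setC _ S).
rewrite big_split /=.
set inner := \sum_(i in S) \sum_(j in S) t i j.
suff -> : inner = 0 by rewrite add0r.
have : inner = - inner.
  rewrite {1}/inner exchange_big /= -sumrN; apply: eq_bigr => j _.
  by rewrite -sumrN; apply: eq_bigr => i _; exact: anti.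
lra.
Qed.

Lemma sum_residual_cut f s t (anti : forall i j, t i j = - t j i) S :
  \sum_(i in S) residual f s t i =
  \sum_(i in S) f i + \sum_(i in S) s i + \sum_(i in S) \sum_(j in ~: S) t i j.
Proof. by rewrite /residual !big_split /= sum_cut. Qed.

Lemma sum_cut_const S (c : R) :
  \sum_(i in S) \sum_(j in ~: S) c = c * (#|S| * (m - #|S|))%:R.
Proof. by rewrite !sumr_const card_setC_ord -mulrnA mulr_natr mulnC. Qed.

Lemma residual_opp f s t i :
  residual (fun a => - f a) (fun a => - s a) (fun a b => - t a b) i =
  - residual f s t i.
Proof. by rewrite /residual sumrN; ring. Qed.

Lemma defect_shift f s t s' t' (d : 'I_m -> R) :
  (forall a, residual f s' t' a = residual f s t a + d a) ->
  defect f s' t' = defect f s t + \sum_a d a * (d a + 2 * residual f s t a).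
Proof.
by move=> shift; rewrite /defect -big_split /=; apply: eq_bigr => a _; rewrite shift; ring.
Qed.

Lemma defect_opp f s t :
  defect (fun a => - f a) (fun a => - s a) (fun a b => - t a b) = defect f s t.
Proof. by apply: eq_bigr => i _; rewrite residual_opp sqrrN. Qed.

End Flows.

Lemma small_steps_nonpos (R : realFieldType) (a c : R) : 0 < a ->
  (forall e, 0 < e -> e <= a -> 0 <= e * (e - c)) -> c <= 0.
Proof.
move=> a0 steps; rewrite leNgt; apply/negP => c0.
pose e := Num.min a (c / 2).
have e0 : 0 < e by rewrite lt_min a0 divr_gt0.
have ec : e <= c / 2 by rewrite ge_min lexx orbT.
have := steps e e0 ltac:(by rewrite ge_min lexx); nra.
Qed.

Section Feasibility.
Variables (R : realFieldType) (m : nat) (lam1 lam2 : R).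
Implicit Types (f s : 'I_m -> R) (t : 'I_m -> 'I_m -> R) (S : {set 'I_m}).

Record feasible s t : Prop := Feasible {
  feasible_source : forall i, `|s i| <= lam1;
  feasible_flow : forall i j, `|t i j| <= lam2;
  feasible_anti : forall i j, t i j = - t j i }.

(* The largest amount a set of k nodes can absorb: lam1 per node plus lam2 per cut edge. *)
Definition capacity (k : nat) := lam1 * k%:R + lam2 * (k * (m - k))%:R.

Lemma balanced_cut_bound f s t : feasible s t ->
  (forall i, residual f s t i = 0) ->
  forall S, `|\sum_(i in S) f i| <= capacity #|S|.
Proof.
move=> [bs bt anti] bal S.
have /eqP : \sum_(i in S) residual f s t i = 0 by rewrite big1.
rewrite sum_residual_cut // -addrA addr_eq0 => /eqP ->; rewrite normrN.
apply: (le_trans (ler_normD _ _)); apply: lerD.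
  apply: (le_trans (ler_norm_sum _ _ _)).
  by rewrite mulr_natr -sumr_const; apply: ler_sum => i _.
apply: (le_trans (ler_norm_sum _ _ _)); rewrite -sum_cut_const.
apply: ler_sum => i _; apply: (le_trans (ler_norm_sum _ _ _)).
by apply: ler_sum => j _.
Qed.

Definition minimizer f s t :=
  feasible s t /\ forall s' t', feasible s' t' -> defect f s t <= defect f s' t'.

Section Minimizer.
Variables (f s : 'I_m -> R) (t : 'I_m -> 'I_m -> R).
Hypotheses (fe : feasible s t)
  (min : forall s' t', feasible s' t' -> defect f s t <= defect f s' t').
Local Notation r := (residual f s t).

(* First-order condition for decreasing the source at i by e. *)
Lemma min_step_source i e : 0 < e -> e <= s i + lam1 -> 0 <= e * (e - 2 * r i).
Proof.
move=> e0 ele.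
pose s' a := s a - e * (a == i)%:R.
have fe' : feasible s' t.
  split; [|exact: feasible_flow fe|exact: feasible_anti fe].
  move=> a; rewrite /s'; have := feasible_source fe a; rewrite !ler_norml.
  by case: eqP => [->|_] /andP[lo hi]; rewrite /= ?mulr1 ?mulr0 ?subr0; apply/andP; split; lra.
have := min fe'.
rewrite (@defect_shift _ _ f s t s' t (fun a => - e * (a == i)%:R)); last first.
  by move=> a; rewrite /residual /s'; ring.
have term a : - e * (a == i)%:R * (- e * (a == i)%:R + 2 * r a) =
              e * (e - 2 * r a) * (a == i)%:R.
  by case: eqP => _ /=; ring.
under eq_bigr do rewrite term.
rewrite sum_delta; lra.
Qed.

(* First-order condition for lowering t i j by e (and raising t j i by e). *)
Lemma min_step_flow i j : i != j -> forall e, 0 < e -> e <= t i j + lam2 ->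
  0 <= e * (e - (r i - r j)).
Proof.
move=> ij e e0 ele; have ji : j != i by rewrite eq_sym.
pose X a b : R := (a == i)%:R * (b == j)%:R - (a == j)%:R * (b == i)%:R.
pose t' a b := t a b - e * X a b.
have rowX a : \sum_b X a b = (a == i)%:R - (a == j)%:R by rewrite sumrB !sum_delta.
have bound a b : `|t' a b| <= lam2.
  (* only the entries (i, j) and (j, i) are moved, and they stay in the box *)
  rewrite /t' /X; have := feasible_flow fe a b.
  have := feasible_flow fe i j; rewrite !ler_norml => /andP[lo hi].
  have anti := feasible_anti fe j i.
  case: (eqVneq a i) => [->|ai]; first case: (eqVneq b j) => [->|bj].
  3: case: (eqVneq a j) => [->|aj]; first case: (eqVneq b i) => [->|bi].
  1-5: rewrite ?(negbTE ij) ?(negbTE ji) ?(negbTE ai) ?(negbTE aj) /=.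
  1-5: by move=> /andP[lo' hi']; apply/andP; split; lra.
have fe' : feasible s t'.
  split; [exact: feasible_source fe|exact: bound|move=> a b].
  by rewrite /t' /X (feasible_anti fe a b); ring.
have := min fe'.
rewrite (@defect_shift _ _ f s t s t' (fun a => - e * ((a == i)%:R - (a == j)%:R))); last first.
  by move=> a; rewrite /residual /t' sumrB -mulr_sumr rowX; ring.
have term a : - e * ((a == i)%:R - (a == j)%:R) *
                (- e * ((a == i)%:R - (a == j)%:R) + 2 * r a) =
              e * (e - 2 * r a) * (a == i)%:R + e * (e + 2 * r a) * (a == j)%:R.
  case: (eqVneq a i) => [->|_]; first by rewrite (negbTE ij) /=; ring.
  by case: eqP => _ /=; ring.
under eq_bigr do rewrite term.
rewrite big_split /= !sum_delta; nra.
Qed.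

Lemma positive_residual_source i : 0 < r i -> s i = - lam1.
Proof.
move=> ri; have := feasible_source fe i; rewrite ler_norml => /andP[lo _].
apply/eqP; rewrite eq_le lo andbT leNgt; apply/negP => lt.
have := small_steps_nonpos (a := s i + lam1) (c := 2 * r i) _ (@min_step_source i).
lra.
Qed.

Lemma residual_gap_flow i j : r j < r i -> t i j = - lam2.
Proof.
move=> rji; have ij : i != j by apply/eqP => eij; move: rji; rewrite eij ltxx.
have := feasible_flow fe i j; rewrite ler_norml => /andP[lo _].
apply/eqP; rewrite eq_le lo andbT leNgt; apply/negP => lt.
have := small_steps_nonpos (a := t i j + lam2) (c := r i - r j) _ (min_step_flow ij).
lra.
Qed.

Lemma minimizer_residual_le0 :
  (forall S, \sum_(i in S) f i <= capacity #|S|) -> forall i, r i <= 0.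
Proof.
move=> cut i; rewrite leNgt; apply/negP => ri.
pose S := [set a | 0 < r a].
have sourceS : \sum_(a in S) s a = - (lam1 * #|S|%:R).
  rewrite (eq_bigr (fun=> - lam1)) => [|a]; last by rewrite inE => /positive_residual_source.
  by rewrite sumr_const mulr_natr mulNrn.
have flowS : \sum_(a in S) \sum_(b in ~: S) t a b = - (lam2 * (#|S| * (m - #|S|))%:R).
  rewrite -mulNr -sum_cut_const; apply: eq_bigr => a; rewrite inE => ra.
  apply: eq_bigr => b; rewrite !inE -leNgt => rb; apply: residual_gap_flow.
  exact: le_lt_trans ra.
have posS : 0 < \sum_(a in S) r a.
  rewrite (bigD1 i) ?inE //=; apply: (lt_le_trans ri); rewrite lerDl.
  by apply: sumr_ge0 => a /andP[]; rewrite inE => /ltW.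
have := cut S; rewrite /capacity.
move: posS; rewrite sum_residual_cut; last exact: feasible_anti fe.
lra.
Qed.

End Minimizer.

Lemma feasible_opp s t :
  feasible s t -> feasible (fun a => - s a) (fun a b => - t a b).
Proof.
case=> bs bt anti; split=> [a|a b|a b]; rewrite ?normrN //.
by rewrite (anti a b).
Qed.

Lemma minimizer_opp f s t : minimizer f s t ->
  minimizer (fun a => - f a) (fun a => - s a) (fun a b => - t a b).
Proof.
case=> fe min; split; first exact: feasible_opp.
move=> s' t' fe'; rewrite defect_opp.
have -> : defect (fun a => - f a) s' t' = defect f (fun a => - s' a) (fun a b => - t' a b).
  by apply: eq_bigr => a _; rewrite /residual sumrN; ring.
exact/min/feasible_opp.
Qed.

Lemma minimizer_balanced f s t : minimizer f s t ->
  (forall S, `|\sum_(i in S) f i| <= capacity #|S|) ->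
  forall i, residual f s t i = 0.
Proof.
move=> mn cut i; have [fe min] := mn; have [fe' min'] := minimizer_opp mn.
apply/eqP; rewrite eq_le (minimizer_residual_le0 fe min) /=.
- rewrite -oppr_le0 -residual_opp; apply: (minimizer_residual_le0 fe' min') => S.
  by rewrite sumrN; apply: le_trans (cut S); rewrite -normrN ler_norm.
- by move=> S; apply: le_trans (cut S); rewrite ler_norm.
Qed.

End Feasibility.

Section Existence.
Variables (R : realType) (m : nat) (lam1 lam2 : R).
Hypotheses (lam1_ge0 : 0 <= lam1) (lam2_ge0 : 0 <= lam2).
Local Notation code := 'rV[R]_(m + m * m).

(* A source vector and a flow matrix are coded by one row vector; the flow is
   antisymmetrised, so every code in the box below decodes to a feasible pair. *)
Definition code_source (v : code) (i : 'I_m) := v ord0 (lshift (m * m) i).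
Definition code_flow (v : code) (i j : 'I_m) :=
  (v ord0 (rshift m (mxvec_index i j)) - v ord0 (rshift m (mxvec_index j i))) / 2.

Definition code_bound (k : 'I_(m + m * m)) := if (k < m)%N then lam1 else lam2.
Definition code_box :=
  [set v : code | forall k, `[- code_bound k, code_bound k]%classic (v ord0 k)]%classic.

Lemma code_box_compact : compact code_box.
Proof.
exact: (@rV_compact R _ (fun k => `[- code_bound k, code_bound k]%classic)
  (fun k => @segment_compact R _ _)).
Qed.

Lemma code_box_nonempty : (code_box !=set0)%classic.
Proof.
exists 0 => k /=; rewrite mxE in_itv /= oppr_le0.
by rewrite /code_bound; case: ifP => _; rewrite andbb.
Qed.

Lemma code_feasible v : code_box v -> feasible lam1 lam2 (code_source v) (code_flow v).
Proof.
move=> box; have bnd k : `|v ord0 k| <= code_bound k.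
  by have := box k; rewrite /= in_itv /= ler_norml.
split=> [i|i j|i j]; last by rewrite /code_flow; ring.
  by have := bnd (lshift _ i); rewrite /code_bound /= ltn_ord.
have := bnd (rshift m (mxvec_index i j)); have := bnd (rshift m (mxvec_index j i)).
rewrite /code_bound /= !ltnNge !leq_addr /= /code_flow !ler_norml.
by move=> /andP[lo1 hi1] /andP[lo2 hi2]; apply/andP; split; lra.
Qed.

Lemma feasible_code s t : feasible lam1 lam2 s t ->
  exists2 v, code_box v & code_source v = s /\ code_flow v = t.
Proof.
case=> bs bt anti; pose v := row_mx (\row_i s i) (mxvec (\matrix_(i, j) t i j)).
exists v; last split.
- move=> k /=; rewrite in_itv /= -ler_norml -(splitK k).
  case: (fintype.split k) => [i|ij]; rewrite /code_bound /=.
    by rewrite row_mxEl mxE ltn_ord; exact: bs.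
  rewrite row_mxEr ltnNge leq_addr /=.
  by case/mxvec_indexP: ij => i j; rewrite mxvecE mxE; exact: bt.
- by apply/funext => i; rewrite /code_source row_mxEl mxE.
- apply/funext => i; apply/funext => j.
  by rewrite /code_flow !row_mxEr !mxvecE !mxE (anti j i); field.
Qed.

Lemma continuous_code_defect (f : 'I_m -> R) :
  continuous (fun v : code => defect f (code_source v) (code_flow v)).
Proof.
have coord k : continuous (fun v : code => v ord0 k) by exact: coord_continuous.
have sum_cont (F : 'I_m -> code -> R) : (forall j, continuous (F j)) ->
    continuous (fun v => \sum_j F j v).
  by move=> cF; apply: continuous_big => //; exact: add_continuous.
have res i v : {for v, continuous (fun v : code =>
    f i + v ord0 (lshift (m * m) i) + \sum_j code_flow v i j)}.
  apply: continuousD; first apply: continuousD.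
  - exact: cst_continuous.
  - exact: coord.
  - apply: (sum_cont (fun j v => code_flow v i j)) => j w.
    apply: (@continuousM _ _ (fun v : code => v ord0 (rshift m (mxvec_index i j)) -
      v ord0 (rshift m (mxvec_index j i))) (fun=> 2^-1)); last exact: cst_continuous.
    by apply: continuousB; exact: coord.
by apply: sum_cont => i v; exact: continuousM (res i v) (res i v).
Qed.

Lemma exists_minimizer (f : 'I_m -> R) :
  exists s t, minimizer lam1 lam2 f s t.
Proof.
have [c /set_mem box_c min_c] := compact_EVT_min code_box_nonempty code_box_compact
  (continuous_subspaceT (continuous_code_defect (f := f))).
exists (code_source c), (code_flow c); split; first exact: code_feasible.
move=> s t /feasible_code[v box_v [<- <-]]; exact/min_c/mem_set.
Qed.

End Existence.

Section SortedSums.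
Variables (R : realFieldType) (m : nat) (f : 'I_m -> R).
Hypothesis f_nonincr : forall i j : 'I_m, (i <= j)%N -> f j <= f i.

Definition prefix (k : nat) : {set 'I_m} := [set j : 'I_m | (j < k)%N].

Lemma card_prefix k : (k <= m)%N -> #|prefix k| = k.
Proof.
move=> km; have -> : prefix k = [set widen_ord km i | i : 'I_k].
  apply/setP => j; rewrite !inE; apply/idP/imsetP.
    by move=> jk; exists (Ordinal jk) => //; apply/val_inj.
  by case=> i _ ->; rewrite /= ltn_ord.
by rewrite card_imset ?card_ord // => a b /(congr1 val) /= ab; exact: val_inj.
Qed.

Lemma card_le_ord (S : {set 'I_m}) : (#|S| <= m)%N.
Proof. by rewrite -[m in (_ <= m)%N]card_ord max_card. Qed.

Lemma sum_le_prefix (S : {set 'I_m}) :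
  \sum_(i in S) f i <= \sum_(i in prefix #|S|) f i.
Proof.
set k := #|S|; set T := prefix k.
have cT : #|T| = k by apply: card_prefix; exact: card_le_ord.
rewrite (big_setID T) [X in _ <= X](big_setID S) /= finset.setIC lerD2l.
have [k0|k_gt0] := posnP k.
  have S0 : S = finset.set0 by apply/eqP; rewrite -cards_eq0 -/k k0.
  have T0 : T = finset.set0 by apply/eqP; rewrite -cards_eq0 cT k0.
  by rewrite S0 T0 finset.setD0 !big_set0.
have pivot_lt : (k.-1 < m)%N by rewrite prednK // card_le_ord.
pose pivot := Ordinal pivot_lt.
have cD : #|S :\: T| = #|T :\: S| by rewrite !cardsD cT finset.setIC.
apply: (le_trans (y := \sum_(i in S :\: T) f pivot)).
  apply: ler_sum => i; rewrite !inE -leqNgt => /andP[iT _]; apply: f_nonincr.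
  by rewrite /=; lia.
rewrite sumr_const cD -sumr_const.
apply: ler_sum => i; rewrite !inE => /andP[_ iT]; apply: f_nonincr.
by rewrite /=; lia.
Qed.

Lemma sum_ge_suffix (S : {set 'I_m}) :
  \sum_(i in ~: prefix (m - #|S|)) f i <= \sum_(i in S) f i.
Proof.
have := sum_le_prefix (~: S); rewrite card_setC_ord => le_compl.
have := sum_split_setC f S; rewrite (sum_split_setC f (prefix (m - #|S|))).
lra.
Qed.

End SortedSums.

Lemma balanced_iff_cut (R : realType) (m : nat) (lam1 lam2 : R)
  (lam1_ge0 : 0 <= lam1) (lam2_ge0 : 0 <= lam2) (f : 'I_m -> R) :
  (exists s t, feasible lam1 lam2 s t /\ forall i, residual f s t i = 0) <->
  (forall S : {set 'I_m}, `|\sum_(i in S) f i| <= capacity m lam1 lam2 #|S|).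
Proof.
split=> [[s [t [fe bal]]]|cut]; first exact: balanced_cut_bound fe bal.
have [s [t mn]] := exists_minimizer lam1_ge0 lam2_ge0 f.
by exists s, t; split; [exact: mn.1 | exact: minimizer_balanced mn cut].
Qed.

Lemma sorted_cut_iff (R : realFieldType) (m : nat) (lam1 lam2 : R) (f : 'I_m -> R)
  (f_nonincr : forall i j : 'I_m, (i <= j)%N -> f j <= f i) :
  (forall S : {set 'I_m}, `|\sum_(i in S) f i| <= capacity m lam1 lam2 #|S|) <->
  ((forall k : nat, (1 <= k <= m)%N ->
      \sum_(j < m | (j < k)%N) f j <= capacity m lam1 lam2 k) /\
   (forall k : nat, (k <= m - 1)%N ->
      - (lam1 * (m - k)%:R) - lam2 * (k * (m - k))%:R <= \sum_(j < m | (k <= j)%N) f j)).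
Proof.
have prefixE k : \sum_(j < m | (j < k)%N) f j = \sum_(j in prefix m k) f j.
  by apply: eq_bigl => j; rewrite inE.
have suffixE k : \sum_(j < m | (k <= j)%N) f j = \sum_(j in ~: prefix m k) f j.
  by apply: eq_bigl => j; rewrite !inE -leqNgt.
split=> [cut|[up lo] S].
  split=> [k /andP[_ km]|k km].
    by have := cut (prefix m k); rewrite card_prefix // prefixE ler_norml => /andP[].
  have km' : (k <= m)%N by lia.
  have := cut (~: prefix m k); rewrite card_setC_ord card_prefix // suffixE.
  by rewrite ler_norml /capacity subKn // mulnC => /andP[+ _]; lra.
have [S0|S_gt0] := posnP #|S|.
  have -> : S = finset.set0 by apply/eqP; rewrite -cards_eq0 S0.
  by rewrite big_set0 cards0 normr0 /capacity !mulr0 addr0.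
rewrite ler_norml; apply/andP; split.
  apply: le_trans (sum_ge_suffix f_nonincr S); rewrite -suffixE.
  have := lo (m - #|S|)%N; rewrite subKn ?card_le_ord // mulnC /capacity.
  by move=> /(_ ltac:(lia)); lra.
apply: (le_trans (sum_le_prefix f_nonincr S)); rewrite -prefixE; apply: up.
by rewrite S_gt0 card_le_ord.
Qed.

Lemma offdiag_balanced_iff (R : realFieldType) (m : nat) (lam1 lam2 : R)
  (lam2_ge0 : 0 <= lam2) (f : 'I_m -> R) :
  (exists (tau0 : 'I_m -> R) (tau : 'I_m -> 'I_m -> R),
      (forall i, - lam1 <= tau0 i <= lam1) /\
      (forall i j, i != j -> - lam2 <= tau i j <= lam2) /\
      (forall i j, i != j -> tau i j = - tau j i) /\
      (forall i, f i + tau0 i + \sum_(j < m | j != i) tau i j = 0)) <->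
  (exists s t, feasible lam1 lam2 s t /\ forall i, residual f s t i = 0).
Proof.
have offdiag (t : 'I_m -> 'I_m -> R) i : t i i = 0 -> \sum_j t i j = \sum_(j < m | j != i) t i j.
  by move=> tii; rewrite (bigD1 i) //= tii add0r.
split=> [[s [t [bs [bt [anti bal]]]]]|[s [t [[bs bt anti] bal]]]].
  pose t' i j := if i == j then 0 else t i j.
  exists s, t'; split; first split=> [i|i j|i j].
  - by rewrite ler_norml.
  - by rewrite /t'; case: eqVneq => [_|/bt]; rewrite ?normr0 ?ler_norml.
  - by rewrite /t'; have [_|ij] := eqVneq i j; rewrite ?oppr0 ?(anti _ _ ij).
  move=> i; rewrite /residual offdiag; last by rewrite /t' eqxx.
  rewrite -[in RHS](bal i); congr (_ + _); apply: eq_bigr => j ji.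
  by rewrite /t' eq_sym (negbTE ji).
exists s, t; split; first by move=> i; rewrite -ler_norml.
split; first by move=> i j _; rewrite -ler_norml.
split; first by move=> i j _.
have tii i : t i i = 0 by have := anti i i; lra.
by move=> i; rewrite -offdiag //; exact: bal.
Qed.

(* Indices 1..m are represented by 'I_m (index i stands for i + 1). *)
Theorem theorem1 (R : realType) (m : nat) (hm : (1 <= m)%N)
  (lam1 lam2 : R) (h1 : 0 <= lam1) (h2 : 0 <= lam2)
  (f : 'I_m -> R) (hf : forall i j : 'I_m, (i <= j)%N -> f j <= f i) :
  (exists (tau0 : 'I_m -> R) (tau : 'I_m -> 'I_m -> R),
      (forall i, - lam1 <= tau0 i <= lam1) /\
      (forall i j, i != j -> - lam2 <= tau i j <= lam2) /\
      (forall i j, i != j -> tau i j = - tau j i) /\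
      (forall i, f i + tau0 i + \sum_(j < m | j != i) tau i j = 0))
  <->
  ((forall k : nat, (1 <= k <= m)%N ->
      \sum_(j < m | (j < k)%N) f j <= lam1 * k%:R + lam2 * (k * (m - k))%:R) /\
   (forall k : nat, (k <= m - 1)%N ->
      \sum_(j < m | (k <= j)%N) f j >= - (lam1 * (m - k)%:R) - lam2 * (k * (m - k))%:R)).
Proof.
apply: iff_trans (offdiag_balanced_iff lam1 h2 f) _.
apply: iff_trans (balanced_iff_cut h1 h2 f) _.
exact: sorted_cut_iff.
Qed.
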